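(* For every finite directed acyclic graph $G=(N,E)$, the Geometric Mechanism satisfies $\frac{\sum_{i\in N}x_i(G)\,p_i}{p^*}\ge \frac12$, where $p^*=\max_{i\in N}p_i$. That is, the Geometric Mechanism has approximation ratio $1/2$ on the family of DAGs.
   Context: In a DAG $G=(N,E)$ with $N=\{1,\dots,n\}$, $P_i$ is the set of nodes having a directed path to $i$ (with $i\in P_i$), and $p_i=|P_i|$. Write $p_i\succ p_j$ if $p_i>p_j$, or $p_i=p_j$ and $i<j$. For a node $i$, let $G^{(i)}$ be the graph obtained from $G$ by deleting all out-edges of $i$. Node $i$ is influential if, with progeny measured in $G^{(i)}$, $p_i\succ p_j$ for all $j\ne i$. The influential set $\{s_1,\dots,s_m\}$ is the set of influential nodes, indexed so that $p_{s_1}\succ\cdots\succ p_{s_m}$, with progeny measured in $G$. The Geometric Mechanism selects $s_j$ with probability $x_{s_j}(G)=1/2^{m-j+1}$ for $j=1,\dots,m$, and selects every other node with probability $0$. *)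

(* Nodes N = {1,...,n} are represented by 'I_n (node k+1 <-> ordinal k);
   the tie-breaking order i < j on node labels is the nat order on ordinals. *)
From mathcomp Require Import all_boot all_order all_algebra.
Set Implicit Arguments. Unset Strict Implicit. Unset Printing Implicit Defensive.
Import Order.TTheory GRing.Theory Num.Theory.

Definition acyclic (n : nat) (e : rel 'I_n) : Prop :=
  forall u v : 'I_n, e u v -> ~~ connect e v u.

Definition progeny (n : nat) (e : rel 'I_n) (i : 'I_n) : nat :=
  #|[set j : 'I_n | connect e j i]|.

Definition succ_p (n : nat) (e : rel 'I_n) (i j : 'I_n) : bool :=
  (progeny e j < progeny e i)%N || ((progeny e i == progeny e j) && (i < j)%N).

Definition del_out (n : nat) (e : rel 'I_n) (i : 'I_n) : rel 'I_n :=
  fun u v => e u v && (u != i).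

Definition influential (n : nat) (e : rel 'I_n) (i : 'I_n) : bool :=
  [forall j : 'I_n, (j != i) ==> succ_p (del_out e i) i j].

Definition num_infl (n : nat) (e : rel 'I_n) : nat := #|[set i | influential e i]|.

(* position j (1-based) of an influential node in the order p_{s_1} \succ ... \succ p_{s_m},
   progeny measured in G *)
Definition infl_rank (n : nat) (e : rel 'I_n) (i : 'I_n) : nat :=
  (#|[set k | influential e k && succ_p e k i]|).+1.

Definition geom_mech (n : nat) (e : rel 'I_n) (i : 'I_n) : rat :=
  if influential e i then ((2%:R ^+ (num_infl e - infl_rank e i).+1)^-1)%R else 0%R.

Definition max_progeny (n : nat) (e : rel 'I_n) : nat := \max_(i : 'I_n) progeny e i.

From mathcomp Require Import all_boot all_order all_algebra.
From mathcomp Require Import zify ring lra.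
Import Order.TTheory GRing.Theory Num.Theory.

(* Let t be a node of maximal progeny, ties broken as in the order on nodes.
   Deleting the out-edges of t keeps p_t and can only shrink the other
   progenies, so t is influential, and it comes first, so x_t = 2^-m.  Every
   influential i has p_t <= 2 p_i: in G^(i) node i beats t, and each ancestor of
   t in G either still reaches t in G^(i) or reaches i.  As the weights of the m
   influential nodes sum to 1 - 2^-m, the expected progeny is at least
   x_t p_t + (1 - 2 x_t) p_t / 2 = p_t / 2. *)

Section RankIn.
Variables (T : finType) (S : {set T}) (key : T -> nat).

Definition rank_in (i : T) : nat := #|[set k in S | key i < key k]|.

Lemma rank_in_lt i : i \in S -> rank_in i < #|S|.
Proof.
move=> Si; apply: proper_card; apply/properP; split.
  by apply/subsetP => k; rewrite inE => /andP[].
by exists i; rewrite // inE ltnn andbF.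
Qed.

Lemma ltn_rank_in i j : j \in S -> key i < key j -> rank_in j < rank_in i.
Proof.
move=> Sj ij; apply: proper_card; apply/properP; split.
  apply/subsetP => k; rewrite !inE => /andP[-> jk] /=; exact: ltn_trans jk.
by exists j; rewrite !inE ?Sj ?ij ?ltnn ?andbF.
Qed.

Lemma rank_in_max t : (forall j, key j <= key t) -> rank_in t = 0.
Proof.
move=> t_max; apply/eqP; rewrite cards_eq0; apply/eqP/setP => k.
by rewrite !inE ltnNge t_max andbF.
Qed.

Hypothesis key_inj : {in S &, injective key}.

Lemma rank_in_inj : {in S &, injective rank_in}.
Proof.
move=> i j Si Sj rij; apply: key_inj => //.
case: (ltngtP (key i) (key j)) => // [/(ltn_rank_in _ _ Sj)|/(ltn_rank_in _ _ Si)];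
  by rewrite rij ltnn.
Qed.

Lemma sum_rank_in (R : nmodType) (F : nat -> R) :
  (\sum_(i in S) F (rank_in i) = \sum_(k < #|S|) F k)%R.
Proof.
have uniq_ranks : uniq [seq rank_in i | i <- enum S].
  by rewrite map_inj_in_uniq ?enum_uniq // => i j; rewrite !mem_enum; exact: rank_in_inj.
have ranks_sub : {subset [seq rank_in i | i <- enum S] <= iota 0 #|S|}.
  by move=> _ /mapP[i + ->]; rewrite mem_enum mem_iota => /rank_in_lt.
have [|_ ranks_eq] := uniq_min_size uniq_ranks ranks_sub.
  by rewrite size_map size_iota -cardE.
have ranks_perm := uniq_perm uniq_ranks (iota_uniq 0 #|S|) ranks_eq.
rewrite -big_enum -(big_map rank_in xpredT) (perm_big _ ranks_perm).
by rewrite -(big_mkord xpredT) /index_iota subn0.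
Qed.

End RankIn.

Arguments rank_in {T} S key i.
Arguments sum_rank_in {T S key} key_inj {R} F.

Section Progeny.
Variables (n : nat) (e : rel 'I_n).

Lemma connect_del_out (i u v : 'I_n) : connect (del_out e i) u v -> connect e u v.
Proof. by apply: connect_sub => x y /andP[exy _]; exact: connect1. Qed.

(* Cut a path from u to v at its first visit to j: the prefix never leaves j. *)
Lemma connect_del_outP (j u v : 'I_n) :
  connect e u v -> connect (del_out e j) u v \/ connect (del_out e j) u j.
Proof.
case/connectP=> p; elim: p u => [|y p IHp] u /=; first by move=> _ ->; left.
case/andP=> euy ey_p v_last; have [->|uj] := eqVneq u j; first by right.
have euy' : del_out e j u y by rewrite /del_out euy uj.
by case: (IHp y ey_p v_last) => /(connect_trans (connect1 euy')); [left|right].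
Qed.

Lemma progeny_del_out_le (i k : 'I_n) : progeny (del_out e i) k <= progeny e k.
Proof.
by apply: subset_leq_card; apply/subsetP => x; rewrite !inE; exact: connect_del_out.
Qed.

Lemma progeny_del_out_self (i : 'I_n) : progeny (del_out e i) i = progeny e i.
Proof.
apply/eqP; rewrite eqn_leq progeny_del_out_le.
apply: subset_leq_card; apply/subsetP => x; rewrite !inE.
by case/(connect_del_outP i).
Qed.

Lemma progeny_le_del_out (j k : 'I_n) :
  progeny e k <= progeny (del_out e j) k + progeny e j.
Proof.
apply: leq_trans (leq_card_setU _ _); apply: subset_leq_card.
apply/subsetP => x; rewrite !inE => /(connect_del_outP j)[-> // | /connect_del_out ->].
by rewrite orbT.
Qed.

Lemma succ_p_progeny (e' : rel 'I_n) (i j : 'I_n) :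
  succ_p e' i j -> progeny e' j <= progeny e' i.
Proof. by case/orP=> [/ltnW // | /andP[/eqP -> _]]. Qed.

Lemma progeny_le_double_influential (i k : 'I_n) :
  influential e i -> progeny e k <= (progeny e i).*2.
Proof.
move=> infl_i; have [-> | ki] := eqVneq k i; first by rewrite -addnn leq_addl.
have /succ_p_progeny := implyP (forallP infl_i k) ki.
rewrite progeny_del_out_self -addnn => le_ki.
by apply: leq_trans (progeny_le_del_out i k) _; rewrite leq_add2r.
Qed.

Lemma progeny_gt0 (i : 'I_n) : 0 < progeny e i.
Proof. by apply/card_gt0P; exists i; rewrite inE connect0. Qed.

End Progeny.

Arguments progeny_le_double_influential {n e i} k.

(* The tie-break towards smaller labels is the summand n - i, which lies in [1, n]. *)
Definition succ_key {n : nat} (e : rel 'I_n) (i : 'I_n) : nat := progeny e i * n + (n - i).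

Lemma succ_pE (n : nat) (e : rel 'I_n) (k i : 'I_n) :
  succ_p e k i = (succ_key e i < succ_key e k).
Proof.
rewrite /succ_p /succ_key; have := ltn_ord i; have := ltn_ord k.
by case: (ltngtP (progeny e i) (progeny e k)) => /= [||->] *; apply/idP/idP; nia.
Qed.

Lemma succ_key_inj (n : nat) (e : rel 'I_n) : injective (succ_key e).
Proof.
move=> i j; rewrite /succ_key; have := ltn_ord i; have := ltn_ord j.
case: (ltngtP (progeny e i) (progeny e j)) => [lt_ij | lt_ji | ->] *.
- by have := leq_mul lt_ij (leqnn n); lia.
- by have := leq_mul lt_ji (leqnn n); lia.
- by apply: ord_inj; lia.
Qed.

Section TopNode.
Variables (n : nat) (e : rel 'I_n) (t : 'I_n).
Hypothesis t_max : forall j, succ_key e j <= succ_key e t.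

Lemma max_progeny_top : max_progeny e = progeny e t.
Proof.
apply/eqP; rewrite eqn_leq (leq_bigmax t) andbT; apply/bigmax_leqP => j _.
rewrite leqNgt; apply/negP => lt_tj; have := t_max j; rewrite /succ_key.
by have := leq_mul lt_tj (leqnn n); have := ltn_ord j; have := ltn_ord t; lia.
Qed.

Lemma top_influential : influential e t.
Proof.
apply/forallP => j; apply/implyP => jt; rewrite succ_pE {2}/succ_key progeny_del_out_self.
apply: (@leq_ltn_trans (succ_key e j)).
  by rewrite leq_add2r leq_mul2r progeny_del_out_le orbT.
by rewrite ltn_neqAle t_max (inj_eq (@succ_key_inj n e)) jt.
Qed.

End TopNode.

Arguments max_progeny_top {n e t}.
Arguments top_influential {n e t}.

Local Open Scope ring_scope.

Lemma sum_inv_pow2 (R : numFieldType) (m : nat) :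
  \sum_(k < m) (2%:R ^+ (m - k))^-1 = 1 - (2%:R ^+ m)^-1 :> R.
Proof.
elim: m => [|m IHm]; first by rewrite big_ord0 expr0 invr1 subrr.
rewrite big_ord_recl subn0; under eq_bigr => k _ do rewrite subSS.
by rewrite IHm exprS invfM; field; rewrite expf_neq0 ?pnatr_eq0.
Qed.

Lemma half_le_weighted_sum (R : realFieldType) (I : finType) (S : {set I}) (t : I)
    (x v : I -> R) (P : R) :
  t \in S -> {in S, forall i, 0 <= x i} -> {in S, forall i, P <= 2 * v i} ->
  v t = P -> \sum_(i in S) x i + x t = 1 -> P / 2 <= \sum_(i in S) x i * v i.
Proof.
move=> St x_ge0 v_ge vt x_sum.
have -> : \sum_(i in S) x i * v i =
          \sum_(i in S) x i * (v i - P / 2) + P / 2 * \sum_(i in S) x i.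
  by rewrite mulr_sumr -big_split; apply: eq_bigr => i _ /=; ring.
have : x t * (v t - P / 2) <= \sum_(i in S) x i * (v i - P / 2).
  rewrite (bigD1 t) //= lerDl; apply: sumr_ge0 => i /andP[Si _].
  by apply: mulr_ge0; [exact: x_ge0 | have := v_ge i Si; lra].
rewrite vt; nra.
Qed.

Section GeometricMechanism.
Variables (n : nat) (e : rel 'I_n).
Let S := [set i | influential e i].

Lemma infl_rankE (i : 'I_n) : infl_rank e i = (rank_in S (succ_key e) i).+1.
Proof. by congr _.+1; apply: eq_card => k; rewrite !inE succ_pE. Qed.

Lemma geom_mechE (i : 'I_n) : influential e i ->
  geom_mech e i = (2%:R ^+ (num_infl e - rank_in S (succ_key e) i))^-1.
Proof.
move=> infl_i; rewrite /geom_mech infl_i infl_rankE subnSK //.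
by apply: rank_in_lt; rewrite inE.
Qed.

Lemma sum_geom_mech : \sum_(i in S) geom_mech e i = 1 - (2%:R ^+ num_infl e)^-1.
Proof.
have key_inj : {in S &, injective (succ_key e)} by move=> i j _ _ /succ_key_inj.
rewrite -sum_inv_pow2 -(sum_rank_in key_inj (fun k => (2%:R ^+ (#|S| - k))^-1)).
by apply: eq_bigr => i; rewrite inE => /geom_mechE.
Qed.

Lemma geom_mech_ge0 (i : 'I_n) : 0 <= geom_mech e i.
Proof. by rewrite /geom_mech; case: ifP; rewrite ?invr_ge0 ?exprn_ge0. Qed.

Lemma sum_geom_mech_progeny :
  \sum_i geom_mech e i * (progeny e i)%:R = \sum_(i in S) geom_mech e i * (progeny e i)%:R.
Proof.
rewrite [RHS]big_mkcond; apply: eq_bigr => i _.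
by rewrite inE /geom_mech; case: ifP; rewrite ?mul0r.
Qed.

End GeometricMechanism.

Theorem theorem2 (n : nat) (e : rel 'I_n) :
  (0 < n)%N -> acyclic e ->
  (\sum_(i : 'I_n) geom_mech e i * (progeny e i)%:R) / (max_progeny e)%:R >= 1 / 2.
Proof.
move=> n_gt0 _.
pose t := [arg max_(i > Ordinal n_gt0) succ_key e i].
have t_max j : (succ_key e j <= succ_key e t)%N.
  by rewrite /t; case: arg_maxnP => // i _ /(_ j isT).
have infl_t := top_influential t_max.
rewrite (max_progeny_top t_max) ler_pdivlMr ?ltr0n ?progeny_gt0 // mul1r mulrC.
rewrite sum_geom_mech_progeny; apply: half_le_weighted_sum => //.
- by rewrite inE.
- by move=> i _; exact: geom_mech_ge0.
- move=> i; rewrite inE => /(progeny_le_double_influential t).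
  by rewrite -(ler_nat rat) -mul2n natrM.
- by rewrite sum_geom_mech geom_mechE // rank_in_max // subn0 subrK.
Qed.
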